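(* Let $n\ge3$, let the sites of an $n$-qubit chain be partitioned into nonempty consecutive intervals $L=\{1,\dots,a\}$, $C=\{a+1,\dots,a+k\}$, $R=\{a+k+1,\dots,n\}$, and let $W\in\mathrm{Sp}(2n,\mathbb{Z}_2)$ be the symplectic matrix of a Clifford unitary satisfying the left wall condition around $C$. Then $G_{\mathrm{left}}$ and $G_{\mathrm{right}}$ are $J$-orthogonal: $g^TJg'=0$ for all $g\in G_{\mathrm{left}}$, $g'\in G_{\mathrm{right}}$. Equivalently, the Pauli subgroups on $C$ corresponding to $G_{\mathrm{left}}$ and $G_{\mathrm{right}}$ pairwise commute.
   Context: Pauli operators modulo phases are identified with $\mathbb{Z}_2^{2n}$ via $(p_1,q_1,\dots,p_n,q_n)\mapsto X^{p_1}Z^{q_1}\otimes\cdots\otimes X^{p_n}Z^{q_n}$; symplectic form $J=\bigoplus_{i=1}^n\begin{pmatrix}0&1\\1&0\end{pmatrix}$ (Paulis commute iff $b^TJb'=0$); $\mathrm{Sp}(2n,\mathbb{Z}_2)=\{S:SJS^T=J\}$. $V_S$ denotes vectors supported on the site set $S$, $\mathbb{Z}_2^{2n}=V_L\oplus V_C\oplus V_R$, vectors $(l,c,r)$, $\pi_C$ the projection onto $V_C$. Left wall condition: for all $t\ge1$, $l\in V_L$: $W^t(l,0,0)\in V_L\oplus V_C\oplus\{0\}$. Internal subspaces: $G_{\mathrm{left}}=\pi_C(\mathrm{span}\{W^t(l,0,0):t\ge0,l\in V_L\})$, $G_{\mathrm{right}}=\pi_C(\mathrm{span}\{W^t(0,0,r):t\ge0,r\in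 V_R\})$. *)

From HB Require Import structures.
From mathcomp Require Import all_boot all_order all_algebra.
Set Implicit Arguments. Unset Strict Implicit. Unset Printing Implicit Defensive.
Import GRing.Theory.
Local Open Scope ring_scope.

(* Coordinate j belongs to site j./2 (0-based site), i.e. 1-based site j./2+1;
   coordinates 2i, 2i+1 are (p_{i+1}, q_{i+1}). *)
Definition vec (n : nat) := 'cV['F_2]_(2 * n).
Definition mat (n : nat) := 'M['F_2]_(2 * n).

Definition site {n} (j : 'I_(2 * n)) : nat := (j %/ 2)%N.

(* symplectic form J = direct sum of [[0,1],[1,0]] *)
Definition Jform (n : nat) : mat n :=
  \matrix_(i, j) (if (site i == site j) && (i != j) then 1 else 0).

Definition symplectic (n : nat) (S : mat n) : Prop :=
  S *m Jform n *m S^T = Jform n.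

Definition mxpow (n : nat) (W : mat n) (t : nat) : mat n :=
  iter t (mulmx W) 1%:M.

(* Site sets (0-based sites): L = [0,a), C = [a,a+k), R = [a+k,n). *)
Definition inL (a : nat) {n} (j : 'I_(2 * n)) : bool := (site j < a)%N.
Definition inC (a k : nat) {n} (j : 'I_(2 * n)) : bool :=
  (a <= site j < a + k)%N.
Definition inR (a k : nat) {n} (j : 'I_(2 * n)) : bool := (a + k <= site j)%N.

Definition supported_on {n} (P : 'I_(2 * n) -> bool) (v : vec n) : Prop :=
  forall j, ~~ P j -> v j 0 = 0.

Definition piC (a k : nat) {n} (v : vec n) : vec n :=
  \col_j (if inC a k j then v j 0 else 0).

Definition left_wall (a k : nat) {n} (W : mat n) : Prop :=
  forall (t : nat) (l : vec n), (1 <= t)%N -> supported_on (inL a) l ->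
    supported_on (fun j => inL a j || inC a k j) (mxpow W t *m l).

Definition in_span {n} (S : vec n -> Prop) (v : vec n) : Prop :=
  exists (m : nat) (c : 'I_m -> 'F_2) (u : 'I_m -> vec n),
    (forall i, S (u i)) /\ v = \sum_(i < m) c i *: u i.

Definition G_left (a k : nat) {n} (W : mat n) (g : vec n) : Prop :=
  exists v, in_span (fun x => exists t l, supported_on (inL a) l /\
                                      x = mxpow W t *m l) v
            /\ g = piC a k v.

Definition G_right (a k : nat) {n} (W : mat n) (g : vec n) : Prop :=
  exists v, in_span (fun x => exists t r, supported_on (inR a k) r /\
                                      x = mxpow W t *m r) v
            /\ g = piC a k v.

(* W is symplectic, so it preserves the form J, and it lies in the finite group
   Sp(2n, F_2), so W^d = 1 for some d > 0.  Hence, for l in V_L and r in V_R,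
   (W^s l)^T J (W^t r) = (W^(s+dt-t) l)^T J r, which vanishes because the wall
   keeps W^(s+dt-t) l inside V_L + V_C, and J pairs each site only with itself.
   Pairing with basis vectors of V_L shows that W^t r has no L-component.  So
   the spans defining G_left and G_right lie in V_L + V_C and V_C + V_R, and on
   such vectors the projection onto V_C does not change the J-pairing. *)

From mathcomp Require Import all_boot all_order all_algebra.
From mathcomp Require Import zify.
Set Implicit Arguments. Unset Strict Implicit. Unset Printing Implicit Defensive.
Import GRing.Theory.
Local Open Scope ring_scope.

Section Pairing.
Variable n : nat.
Implicit Types (i j : 'I_(2 * n)) (u w : vec n).

Lemma partner_subproof i : ((if odd i then i.-1 else i.+1) < 2 * n)%N.
Proof. by have := ltn_ord i; case: ifP; lia. Qed.

Definition partner i : 'I_(2 * n) := Ordinal (partner_subproof i).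

Lemma site_partner i : site (partner i) = site i.
Proof. by rewrite /site /=; case: ifP; lia. Qed.

Lemma partnerK : involutive partner.
Proof. by move=> i; apply/val_inj => /=; case: ifP; case: ifP; lia. Qed.

Lemma Jform_partner i j : Jform n i j = (j == partner i)%:R.
Proof.
rewrite mxE; suff -> : (site i == site j) && (i != j) = (j == partner i) by case: eqP.
by rewrite /site -val_eqE -[j == _]val_eqE /=; case: ifP; lia.
Qed.

Lemma Jform_mulmx m (A : 'M['F_2]_(2 * n, m)) :
  Jform n *m A = \matrix_(i, j) A (partner i) j.
Proof.
apply/matrixP => i j; rewrite !mxE (bigD1 (partner i)) //= big1.
  by rewrite Jform_partner eqxx mul1r addr0.
by move=> l /negbTE nl; rewrite Jform_partner nl mul0r.
Qed.

Lemma Jform_sqr : Jform n *m Jform n = 1%:M.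
Proof.
by apply/matrixP => i j; rewrite Jform_mulmx mxE Jform_partner partnerK mxE eq_sym.
Qed.

Definition sform u w : 'M['F_2]_1 := u^T *m Jform n *m w.

Lemma sformE u w : sform u w = (\sum_i u i 0 * w (partner i) 0)%:M.
Proof.
rewrite [LHS]mx11_scalar /sform -mulmxA Jform_mulmx mxE.
by congr (_%:M); apply: eq_bigr => i _; rewrite !mxE.
Qed.

Lemma sform_delta i w : sform (delta_mx i 0) w 0 0 = w (partner i) 0.
Proof. by rewrite /sform -mulmxA trmx_delta -rowE Jform_mulmx !mxE. Qed.

Lemma sform_disjoint (P Q : pred 'I_(2 * n)) u w :
  supported_on P u -> supported_on Q w ->
  (forall i, P i -> ~~ Q (partner i)) -> sform u w = 0.
Proof.
move=> uP wQ PQ; rewrite sformE big1 ?raddf0 // => i _.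
by case: (boolP (P i)) => [/PQ/wQ -> | /uP ->]; rewrite ?mulr0 ?mul0r.
Qed.

Lemma span_supported (P : pred 'I_(2 * n)) (S : vec n -> Prop) v :
  (forall u, S u -> supported_on P u) -> in_span S v -> supported_on P v.
Proof.
move=> SP [m [c [u [Su ->]]]] j Pj; rewrite summxE big1 // => i _.
by rewrite mxE SP ?mulr0.
Qed.

Lemma span_sform_eq0 (S1 S2 : vec n -> Prop) v v' :
  (forall u w, S1 u -> S2 w -> sform u w = 0) ->
  in_span S1 v -> in_span S2 v' -> sform v v' = 0.
Proof.
move=> S12 [m [c [u [Su ->]]]] [m' [c' [u' [Su' ->]]]].
rewrite /sform raddf_sum big1 // => j _.
rewrite raddf_sum /= !mulmx_suml big1 // => i _.
by rewrite linearZ /= linearZ /= -!scalemxAl -/(sform _ _) S12 ?scaler0.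
Qed.

End Pairing.

Lemma sform_piC (a k : nat) n (x y : vec n) :
  supported_on (fun j => inL a j || inC a k j) x ->
  supported_on (fun j => inC a k j || inR a k j) y ->
  sform (piC a k x) (piC a k y) = sform x y.
Proof.
move=> xLC yCR; rewrite !sformE; congr (_%:M); apply: eq_bigr => i _.
rewrite !mxE /inC site_partner -/(inC a k i).
case iC: (inC a k i) => //; case: (boolP (inL a i)) => iL.
- by rewrite yCR ?mulr0 //; move: iC iL; rewrite /inL /inC /inR site_partner; lia.
- by rewrite xLC ?mul0r // iC orbF.
Qed.

Lemma iter_mulmx1 (R : pzRingType) m (W : 'M[R]_m) t :
  iter t (mulmx W) 1%:M = W ^+ t.
Proof. by elim: t => [|t IHt] //=; rewrite IHt exprS mulmxE. Qed.

Lemma mxpowE n (W : mat n) t : mxpow W t = W ^+ t.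
Proof. exact: iter_mulmx1. Qed.

Lemma unitmx_expr_order (R : finComUnitRingType) m (W : 'M[R]_m) :
  W \in unitmx -> exists2 d, (0 < d)%N & W ^+ d = 1.
Proof.
move=> Wu; have W_inj : injective (@mulmx _ m m m W) := can_inj (mulKmx Wu).
by exists (order (mulmx W) 1%:M); rewrite ?order_gt0 // -iter_mulmx1 iter_order.
Qed.

Section Symplectic.
Variables (n : nat) (W : mat n).
Hypothesis symW : symplectic W.

Lemma symplectic_mulmx_inv : W *m (Jform n *m W^T *m Jform n) = 1%:M.
Proof. by rewrite !mulmxA symW Jform_sqr. Qed.

Lemma symplectic_unitmx : W \in unitmx.
Proof. exact: (mulmx1_unit symplectic_mulmx_inv).1. Qed.

Lemma symplectic_trmx : W^T *m Jform n *m W = Jform n.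
Proof.
have := congr1 (mulmx (Jform n)) (mulmx1C symplectic_mulmx_inv).
by rewrite mulmx1 !mulmxA Jform_sqr mul1mx.
Qed.

Lemma sform_mulmx u w : sform (W *m u) (W *m w) = sform u w.
Proof.
by rewrite /sform trmx_mul -!mulmxA (mulmxA W^T) (mulmxA _ W) symplectic_trmx.
Qed.

Lemma sform_expr t u w : sform (W ^+ t *m u) (W ^+ t *m w) = sform u w.
Proof.
elim: t => [|t IHt]; first by rewrite expr0 !mul1mx.
by rewrite exprS -mulmxE -!mulmxA sform_mulmx IHt.
Qed.

End Symplectic.

Section LeftWall.
Variables (n a k : nat) (W : mat n).
Hypotheses (symW : symplectic W) (wall : left_wall a k W).

Lemma left_orbit_supported t l : supported_on (inL a) l ->
  supported_on (fun j => inL a j || inC a k j) (W ^+ t *m l).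
Proof.
case: t => [lL j|t lL]; last by have := wall (ltn0Sn t) lL; rewrite mxpowE.
by rewrite expr0 mul1mx negb_or => /andP[/lL].
Qed.

Lemma sform_left_right_orbit s t l r :
  supported_on (inL a) l -> supported_on (inR a k) r ->
  sform (W ^+ s *m l) (W ^+ t *m r) = 0.
Proof.
move=> lL rR; have [d d_gt0 Wd] := unitmx_expr_order (symplectic_unitmx symW).
have le_t : (t <= s + d * t)%N by rewrite (leq_trans (leq_pmull t d_gt0)) ?leq_addl.
have -> : W ^+ s = W ^+ t * W ^+ (s + d * t - t).
  by rewrite -exprD subnKC // exprD exprM Wd expr1n mulr1.
rewrite -mulmxE -mulmxA (sform_expr symW).
apply: sform_disjoint (left_orbit_supported _ lL) rR _ => i.
by rewrite /inL /inC /inR site_partner; lia.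
Qed.

Lemma right_orbit_supported t r : supported_on (inR a k) r ->
  supported_on (fun j => inC a k j || inR a k j) (W ^+ t *m r).
Proof.
move=> rR j jCR; have jL : inL a j by move: jCR; rewrite /inL /inC /inR; lia.
have pjL : supported_on (inL a) (delta_mx (partner j) 0).
  move=> i; rewrite mxE /inL; case: (i =P partner j) => [-> | _] //=.
  by rewrite site_partner -/(inL a j) jL.
have := sform_left_right_orbit 0 t pjL rR; rewrite expr0 mul1mx.
by move=> /matrixP/(_ 0 0); rewrite sform_delta partnerK => ->; rewrite mxE.
Qed.

End LeftWall.

Theorem lemma5 (n a k : nat) (W : 'M['F_2]_(2 * n)) :
  (3 <= n)%N -> (0 < a)%N -> (0 < k)%N -> (a + k < n)%N ->
  symplectic W ->
  left_wall a k W ->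
  forall g g' : 'cV['F_2]_(2 * n),
    G_left a k W g -> G_right a k W g' ->
    g^T *m Jform n *m g' = 0.
Proof.
move=> _ _ _ _ symW wall _ _ [v [v_span ->]] [v' [v'_span ->]].
have vLC : supported_on (fun j => inL a j || inC a k j) v.
  apply: span_supported v_span => _ [t [l [lL ->]]].
  by rewrite mxpowE; apply: left_orbit_supported.
have v'CR : supported_on (fun j => inC a k j || inR a k j) v'.
  apply: span_supported v'_span => _ [t [r [rR ->]]].
  by rewrite mxpowE; apply: right_orbit_supported.
rewrite -/(sform _ _) sform_piC // (span_sform_eq0 _ v_span v'_span) //.
move=> _ _ [s [l [lL ->]]] [t [r [rR ->]]].
by rewrite !mxpowE (sform_left_right_orbit symW wall).
Qed.
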